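(* Let $M$ and $k$ be fixed nonnegative integers, and let $\Phi$ be an open formula of $\mathcal{L}_{\mathrm{Ab}}$ with $n$ variables such that every term occurring in $\Phi$ has depth at most $k$. Then for any $a_1,\dots,a_n\in[-2^M,2^M]$, $$\mathbf{R}\models\Phi(a_1,\dots,a_n)\quad\text{iff}\quad [0,1]_{\text{\L}}[\tfrac12]\models\tau'(\Phi)(r_{M,k}(a_1),\dots,r_{M,k}(a_n)).$$ Equivalently, for any $b_1,\dots,b_n\in\left[\tfrac12-\tfrac1{2^{k+1}},\tfrac12+\tfrac1{2^{k+1}}\right]$, $$[0,1]_{\text{\L}}[\tfrac12]\models\tau'(\Phi)(b_1,\dots,b_n)\quad\text{iff}\quad \mathbf{R}\models\Phi(r_{M,k}^{-1}(b_1),\dots,r_{M,k}^{-1}(b_n)).$$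
   Context: $\mathcal{L}_{\mathrm{Ab}}=\langle +,-,0,\wedge,\vee\rangle$; $\mathbf{R}=\langle\mathbb{R},+,-,\wedge,\vee,0\rangle$ is the ordered additive group of reals with $\wedge=\min$, $\vee=\max$. Open formulas are finite Boolean combinations (negation, conjunction, disjunction) of atoms $\phi=\psi$. $[0,1]_{\text{\L}}[\tfrac12]$ has domain $[0,1]$ with $\neg a=1-a$, $a\otimes b=\max(0,a+b-1)$, $a\oplus b=\min(1,a+b)$, $a\to b=\min(1,1-a+b)$, $\wedge=\min$, $\vee=\max$, and constants $0,1,\tfrac12$. Depth of terms: variables and constants have depth $0$, $\mathrm{depth}(-\phi)=\mathrm{depth}(\phi)+1$, $\mathrm{depth}(\phi\circ\psi)=\max(\mathrm{depth}(\phi),\mathrm{depth}(\psi))+1$ for $\circ\in\{+,\wedge,\vee\}$. The term translation $\tau$: $\tau(x)=x$ for variables; $\tau(0)=\tfrac12$; $\tau(-\phi)=\neg\tau(\phi)$; $\tau(\phi+\psi)=(\tau(\phi)\oplus\tau(\psi))\otimes(\tfrac12\oplus(\tau(\phi)\otimes\tau(\psi)))$; $\tau(\phi\vee\psi)=\tau(\phi)\vee\tau(\psi)$; $\tau(\phi\wedge\psi)=\tau(\phi)\wedge\tau(\psi)$. For an open formula $\Phi$, $\tau'(\Phi)$ is obtained by replacing each atom $\phi=\psi$ by $\tau(\phi)=\tau(\psi)$, leaving the Boolean structure unchanged. $r_{M,k}(a)=\frac{a}{2^{M+k+1}}+\frac12$, a bijection from $[-2^M,2^M]$ onto $[\tfrac12-\tfrac1{2^{k+1}},\tfrac12+\tfrac1{2^{k+1}}]$.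 *)

From HB Require Import structures.
From mathcomp Require Import all_boot all_order all_algebra.
From mathcomp Require Import reals.
Set Implicit Arguments. Unset Strict Implicit. Unset Printing Implicit Defensive.
Import Order.TTheory GRing.Theory Num.Theory.
Local Open Scope ring_scope.

Inductive abterm (n : nat) : Type :=
  | AVar  : 'I_n -> abterm n
  | AZero : abterm n
  | ANeg  : abterm n -> abterm n
  | AAdd  : abterm n -> abterm n -> abterm n
  | AMeet : abterm n -> abterm n -> abterm n
  | AJoin : abterm n -> abterm n -> abterm n.

Inductive abform (n : nat) : Type :=
  | AEq  : abterm n -> abterm n -> abform n
  | ANot : abform n -> abform n
  | AAnd : abform n -> abform n -> abform n
  | AOr  : abform n -> abform n -> abform n.

Arguments AZero {n}.

Fixpoint depth n (t : abterm n) : nat :=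
  match t with
  | AVar _ | AZero => 0
  | ANeg s => (depth s).+1
  | AAdd s u | AMeet s u | AJoin s u => (maxn (depth s) (depth u)).+1
  end.

(* every term occurring in the formula has depth <= k
   (subterms of a term have smaller depth, so it suffices to bound atom sides) *)
Fixpoint form_depth_le n (k : nat) (F : abform n) : Prop :=
  match F with
  | AEq s u => (depth s <= k)%N /\ (depth u <= k)%N
  | ANot G => form_depth_le k G
  | AAnd G H | AOr G H => form_depth_le k G /\ form_depth_le k H
  end.

Fixpoint evalAb (R : realType) n (a : 'I_n -> R) (t : abterm n) : R :=
  match t with
  | AVar i => a i
  | AZero => 0
  | ANeg s => - evalAb a s
  | AAdd s u => evalAb a s + evalAb a u
  | AMeet s u => Num.min (evalAb a s) (evalAb a u)
  | AJoin s u => Num.max (evalAb a s) (evalAb a u)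
  end.

Fixpoint holdsAb (R : realType) n (a : 'I_n -> R) (F : abform n) : Prop :=
  match F with
  | AEq s u => evalAb a s = evalAb a u
  | ANot G => ~ holdsAb a G
  | AAnd G H => holdsAb a G /\ holdsAb a H
  | AOr G H => holdsAb a G \/ holdsAb a H
  end.

Inductive lterm (n : nat) : Type :=
  | LVar  : 'I_n -> lterm n
  | LZero : lterm n
  | LOne  : lterm n
  | LHalf : lterm n
  | LNeg  : lterm n -> lterm n
  | LOtimes : lterm n -> lterm n -> lterm n
  | LOplus  : lterm n -> lterm n -> lterm n
  | LImp  : lterm n -> lterm n -> lterm n
  | LMeet : lterm n -> lterm n -> lterm n
  | LJoin : lterm n -> lterm n -> lterm n.

Arguments LZero {n}.
Arguments LOne {n}.
Arguments LHalf {n}.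

Inductive lform (n : nat) : Type :=
  | LEq  : lterm n -> lterm n -> lform n
  | LNot : lform n -> lform n
  | LAnd : lform n -> lform n -> lform n
  | LOr  : lform n -> lform n -> lform n.

(* ---------- Semantics in the standard MV-algebra [0,1]_L[1/2] ----------
   The carrier is [0,1] (subset of R); the operations below are the
   standard ones and map [0,1] into [0,1]. *)
Definition lneg (R : realType) (x : R) : R := 1 - x.
Definition lotimes (R : realType) (x y : R) : R := Num.max 0 (x + y - 1).
Definition loplus (R : realType) (x y : R) : R := Num.min 1 (x + y).
Definition limp (R : realType) (x y : R) : R := Num.min 1 (1 - x + y).

Fixpoint evalL (R : realType) n (b : 'I_n -> R) (t : lterm n) : R :=
  match t with
  | LVar i => b i
  | LZero => 0
  | LOne => 1
  | LHalf => 2^-1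
  | LNeg s => lneg (evalL b s)
  | LOtimes s u => lotimes (evalL b s) (evalL b u)
  | LOplus s u => loplus (evalL b s) (evalL b u)
  | LImp s u => limp (evalL b s) (evalL b u)
  | LMeet s u => Num.min (evalL b s) (evalL b u)
  | LJoin s u => Num.max (evalL b s) (evalL b u)
  end.

Fixpoint holdsL (R : realType) n (b : 'I_n -> R) (F : lform n) : Prop :=
  match F with
  | LEq s u => evalL b s = evalL b u
  | LNot G => ~ holdsL b G
  | LAnd G H => holdsL b G /\ holdsL b H
  | LOr G H => holdsL b G \/ holdsL b H
  end.

Fixpoint tau n (t : abterm n) : lterm n :=
  match t with
  | AVar i => LVar i
  | AZero => LHalf
  | ANeg s => LNeg (tau s)
  | AAdd s u =>
      LOtimes (LOplus (tau s) (tau u)) (LOplus LHalf (LOtimes (tau s) (tau u)))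
  | AMeet s u => LMeet (tau s) (tau u)
  | AJoin s u => LJoin (tau s) (tau u)
  end.

Fixpoint tau' n (F : abform n) : lform n :=
  match F with
  | AEq s u => LEq (tau s) (tau u)
  | ANot G => LNot (tau' G)
  | AAnd G H => LAnd (tau' G) (tau' H)
  | AOr G H => LOr (tau' G) (tau' H)
  end.

Definition r_map (R : realType) (M k : nat) (a : R) : R :=
  a / 2 ^+ (M + k + 1) + 2^-1.
Definition r_inv (R : realType) (M k : nat) (b : R) : R :=
  (b - 2^-1) * 2 ^+ (M + k + 1).

(** The map [x |-> x / c + 1/2] with [c = 2^(M+k+1)] embeds the lattice-ordered
    group operations into [[0,1]_L[1/2]]: it turns [-] into Łukasiewicz
    negation and commutes with [min] and [max] since it is increasing and
    affine.  The Łukasiewicz term [tau(x + y)] computes [u + v - 1/2] exactly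
    when [u + v] lies in [[1/2, 3/2]], i.e. when the encoded sum [x + y] has
    absolute value at most [c/2].  A term of depth [d] over inputs bounded by
    [2^M] has absolute value at most [2^(M+d)], so on terms of depth at most
    [k] this always holds; the encoding being injective, atoms, and hence open
    formulas, are preserved.  The second half of the theorem is the first one
    read through [r_inv], which maps the interval around [1/2] onto
    [[-2^M, 2^M]]. *)
From mathcomp Require Import all_boot all_order all_algebra.
From mathcomp Require Import reals.
From mathcomp Require Import lra.
Import Order.TTheory GRing.Theory Num.Theory.
Local Open Scope ring_scope.

Section Bounds.
Context {R : realType} {n : nat} {a : 'I_n -> R} {B : R}.
Hypotheses (B_ge0 : 0 <= B) (a_bound : forall i, `|a i| <= B).

Lemma evalAb_bound t : `|evalAb a t| <= B * 2 ^+ depth t.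
Proof.
have mono d e : (d <= e)%N -> B * 2 ^+ d <= B * 2 ^+ e.
  by move=> le_de; rewrite ler_wpM2l // ler_eXn2l // ltr1n.
have B2_ge0 d : 0 <= B * 2 ^+ d by rewrite mulr_ge0 // exprn_ge0.
elim: t => [i||s IH|s IHs u IHu|s IHs u IHu|s IHs u IHu] /=.
- by rewrite expr0 mulr1.
- by rewrite normr0 mulr1.
- by rewrite normrN exprS (le_trans IH) // mulrCA ler_peMl // ler1n.
all: have {IHs}hs := le_trans IHs (mono _ _ (leq_maxl (depth s) (depth u))).
all: have {IHu}hu := le_trans IHu (mono _ _ (leq_maxr (depth s) (depth u))).
all: have := B2_ge0 (maxn (depth s) (depth u)); rewrite exprS mulrCA.
all: set d := maxn (depth s) (depth u) in hs hu *.
- by move=> ?; rewrite (le_trans (ler_normD _ _)) //; lra.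
- by rewrite minElt; case: ifP => _ ?; lra.
- by rewrite maxElt; case: ifP => _ ?; lra.
Qed.

End Bounds.

Definition ladd {R : realType} (u v : R) : R :=
  lotimes (loplus u v) (loplus 2^-1 (lotimes u v)).

Lemma laddE (R : realType) (u v : R) :
  2^-1 <= u + v <= 1 + 2^-1 -> ladd u v = u + v - 2^-1.
Proof.
move=> /andP[lo hi]; rewrite /ladd /lotimes /loplus.
have [le_uv1|lt1_uv] := leP (u + v) 1.
- have uv_le1 : u + v - 1 <= 0 by lra.
  have half_le1 : 2^-1 <= 1 :> R by lra.
  have uv_ge : 0 <= u + v + 2^-1 - 1 by lra.
  by rewrite (max_l uv_le1) addr0 (min_r half_le1) (max_r uv_ge); lra.
- have uv_ge1 : 0 <= u + v - 1 by lra.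
  have uv_le : 2^-1 + (u + v - 1) <= 1 by lra.
  have res_ge0 : 0 <= 1 + (2^-1 + (u + v - 1)) - 1 by lra.
  by rewrite (max_r uv_ge1) (min_r uv_le) (max_r res_ge0); lra.
Qed.

Definition enc {R : realType} (c x : R) : R := x / c + 2^-1.

Section Encoding.
Context {R : realType} {c : R}.
Hypothesis c_gt0 : 0 < c.

Lemma enc_inj : injective (enc c).
Proof. by move=> x y /addIr /mulIf; apply; rewrite invr_neq0 ?gt_eqF. Qed.

Lemma enc_opp x : lneg (enc c x) = enc c (- x).
Proof. by rewrite /lneg /enc mulNr; lra. Qed.

Lemma enc_min x y : Num.min (enc c x) (enc c y) = enc c (Num.min x y).
Proof. by rewrite /enc -addr_minl -minr_pMl // invr_ge0 ltW. Qed.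

Lemma enc_max x y : Num.max (enc c x) (enc c y) = enc c (Num.max x y).
Proof. by rewrite /enc -addr_maxl -maxr_pMl // invr_ge0 ltW. Qed.

Lemma enc_add x y : `|x + y| * 2 <= c -> ladd (enc c x) (enc c y) = enc c (x + y).
Proof.
move=> small_sum.
have : `|(x + y) / c| <= 2^-1.
  by rewrite normf_div (gtr0_norm c_gt0) ler_pdivrMr //; lra.
rewrite ler_norml mulrDl => /andP[? ?].
by rewrite /enc laddE; lra.
Qed.

Context {n k : nat} {B : R} {a b : 'I_n -> R}.
Hypotheses (B_ge0 : 0 <= B) (a_bound : forall i, `|a i| <= B).
Hypotheses (scale : B * 2 ^+ k.+1 <= c) (b_enc : forall i, b i = enc c (a i)).

Lemma evalL_tau t : (depth t <= k)%N -> evalL b (tau t) = enc c (evalAb a t).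
Proof.
elim: t => [i||s IH|s IHs u IHu|s IHs u IHu|s IHs u IHu] /= d_le.
- exact: b_enc.
- by rewrite /enc mul0r add0r.
- by rewrite IH ?enc_opp // ltnW.
all: have ds := leq_trans (leq_maxl _ _) (ltnW d_le).
all: have du := leq_trans (leq_maxr _ _) (ltnW d_le).
- rewrite -/(ladd _ _) IHs // IHu // enc_add //.
  apply: le_trans scale; rewrite exprS mulrCA mulrC ler_pM2l //.
  apply: le_trans (evalAb_bound B_ge0 a_bound (AAdd s u)) _.
  by rewrite ler_wpM2l // ler_eXn2l // ltr1n.
- by rewrite IHs // IHu // enc_min.
- by rewrite IHs // IHu // enc_max.
Qed.

Lemma holdsL_tau' F : form_depth_le k F -> holdsAb a F <-> holdsL b (tau' F).
Proof.
elim: F => [s u|G IH|G IHG H IHH|G IHG H IHH] /=.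
- move=> [ds du]; rewrite !evalL_tau //.
  by split=> [-> // | /enc_inj].
- by move=> /IH; tauto.
- by move=> [/IHG ? /IHH ?]; tauto.
- by move=> [/IHG ? /IHH ?]; tauto.
Qed.

End Encoding.

Theorem mainTheorem5 (R : realType) (M k n : nat) (Phi : abform n) :
  form_depth_le k Phi ->
  (forall a : 'I_n -> R,
     (forall i, - 2 ^+ M <= a i <= 2 ^+ M) ->
     (holdsAb a Phi <-> holdsL (fun i => r_map M k (a i)) (tau' Phi))) /\
  (forall b : 'I_n -> R,
     (forall i, 2^-1 - (2 ^+ (k + 1))^-1 <= b i <= 2^-1 + (2 ^+ (k + 1))^-1) ->
     (holdsL b (tau' Phi) <-> holdsAb (fun i => r_inv M k (b i)) Phi)).
Proof.
move=> depth_Phi.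
have c_gt0 : (0 : R) < 2 ^+ (M + k + 1) by rewrite exprn_gt0.
have scale : 2 ^+ M * 2 ^+ k.+1 <= 2 ^+ (M + k + 1) :> R.
  by rewrite -exprD addn1 addnS.
have M_ge0 : (0 : R) <= 2 ^+ M by rewrite exprn_ge0.
split=> [a a_bound | b b_bound].
  by apply: (holdsL_tau' c_gt0 M_ge0 _ scale) => // i; rewrite ler_norml.
have r_inv_bound i : `|r_inv M k (b i)| <= 2 ^+ M.
  have w_gt0 : (0 : R) < 2 ^+ (k + 1) by rewrite exprn_gt0.
  rewrite /r_inv normrM (gtr0_norm c_gt0) -addnA exprD mulrCA ler_piMr //.
  rewrite -ler_pdivlMr // div1r ler_norml.
  by move: (b_bound i) => /andP[? ?]; lra.
have b_enc i : b i = enc (2 ^+ (M + k + 1)) (r_inv M k (b i)).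
  by rewrite /enc /r_inv mulfK ?gt_eqF //; lra.
by rewrite (holdsL_tau' c_gt0 M_ge0 r_inv_bound scale b_enc _ depth_Phi).
Qed.
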